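(* Let $(\Omega,\mathcal F,\mathbb P)$ be a probability space and let $\mathcal X$ be an ideal of $L^0$, equipped with a vector topology and the almost-sure order. Let $V_1:\mathbb R^N\to\mathcal X$ be weakly upper semicontinuous, and assume one of the following: (i) $\mathcal X=L^0$ equipped with the topology of convergence in probability; (ii) $\mathcal X$ is order continuous and $V_1$ is nondecreasing (componentwise order on $\mathbb R^N$, almost-sure order on $\mathcal X$). Then $V_1$ is upper semicontinuous.
   Context: $L^0$ is the space of equivalence classes (modulo a.s. equality) of real random variables on $(\Omega,\mathcal F,\mathbb P)$ with the a.s. partial order, $\mathcal X_+$ being the a.s. nonnegative elements. $\mathcal X\subset L^0$ is an ideal if it is a linear subspace that is solid ($X\in\mathcal X$ whenever $|X|\le|Y|$ a.s. for some $Y\in\mathcal X$) and $\max\{X,Y\}\in\mathcal X$ for all $X,Y\in\mathcal X$. $\mathcal X$ is order continuous if for all $(X_n)\subset\mathcal X$ and $X\in\mathcal X$ with $X_n\to X$ a.s. and $\sup_n|X_n|\in\mathcal X$, one has $X_n\to X$ in the topology of $\mathcal X$. $V_1$ is weakly upper semicontinuous if for all $(x_n)\subset\mathbb R^N$, $x\in\mathbb R^N$ with $x_n\to x$, $V_1(x)\ge\limsup_n V_1(x_n)$ a.s. $V_1$ is upper semicontinuous at $x$ if for every neighborhood $\mathcal U$ of $V_1(x)$ there exists a neighborhood $\mathcal V$ of $x$ with $V_1(\mathcal V)\subset\mathcal U-\mathcal X_+$, and upper semicontinuous if this holds at every $x$. *)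

From HB Require Import structures.
From mathcomp Require Import all_boot all_order all_algebra.
From mathcomp Require Import all_classical all_reals all_analysis.
Set Implicit Arguments. Unset Strict Implicit. Unset Printing Implicit Defensive.
Import Order.TTheory GRing.Theory Num.Theory.
Import numFieldNormedType.Exports.
Local Open Scope classical_set_scope.
Local Open Scope ring_scope.

(* Model of an ideal X of L^0(Omega,F,P) equipped with a vector topology:
   X is a topological vector space over R (topologicalLmodType R: addition and
   scalar multiplication are continuous), and [i : X -> T -> R] sends each
   element (an equivalence class) to a representative measurable function.
   [i] is injective modulo a.s. equality, linear modulo a.s. equality, and its
   image (modulo a.s. equality) is solid and closed under max. *)
Definition L0_ideal d (T : measurableType d) (R : realType)
  (P : probability T R) (X : topologicalLmodType R) (i : X -> T -> R) : Prop :=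
  [/\ (forall x, measurable_fun setT (i x)),
      (forall x y, (i x = i y %[ae P]) -> x = y),
      (forall (a : R) x y,
          (i (a *: x + y) = (fun w => a * i x w + i y w) %[ae P])),
      (forall (f : T -> R) (y : X), measurable_fun setT f ->
          {ae P, forall w, `|f w| <= `|i y w|} ->
          exists x : X, (i x = f %[ae P]))
    & (forall x y : X, exists z : X,
          (i z = (fun w => Num.max (i x w) (i y w)) %[ae P]))].

Definition ae_le d (T : measurableType d) (R : realType)
  (P : probability T R) (X : topologicalLmodType R) (i : X -> T -> R)
  (x y : X) : Prop := {ae P, forall w, i x w <= i y w}.

Definition ae_nonneg d (T : measurableType d) (R : realType)
  (P : probability T R) (X : topologicalLmodType R) (i : X -> T -> R)
  (x : X) : Prop := {ae P, forall w, 0 <= i x w}.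

Definition weakly_usc d (T : measurableType d) (R : realType)
  (P : probability T R) (X : topologicalLmodType R) (i : X -> T -> R)
  (N : nat) (V1 : 'rV[R]_N -> X) : Prop :=
  forall (xs : nat -> 'rV[R]_N) (x : 'rV[R]_N), xs @ \oo --> x ->
    {ae P, forall w,
       (limn_esup (fun n => (i (V1 (xs n)) w)%:E) <= (i (V1 x) w)%:E)%E}.

Definition usc_at d (T : measurableType d) (R : realType)
  (P : probability T R) (X : topologicalLmodType R) (i : X -> T -> R)
  (N : nat) (V1 : 'rV[R]_N -> X) (x : 'rV[R]_N) : Prop :=
  forall U : set X, nbhs (V1 x) U ->
    exists W : set 'rV[R]_N, nbhs x W /\
      forall y, W y -> exists u p : X, [/\ U u, ae_nonneg P i p & V1 y = u - p].

Definition usc d (T : measurableType d) (R : realType)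
  (P : probability T R) (X : topologicalLmodType R) (i : X -> T -> R)
  (N : nat) (V1 : 'rV[R]_N -> X) : Prop :=
  forall x, usc_at P i V1 x.

Definition nondecreasingV d (T : measurableType d) (R : realType)
  (P : probability T R) (X : topologicalLmodType R) (i : X -> T -> R)
  (N : nat) (V1 : 'rV[R]_N -> X) : Prop :=
  forall x y : 'rV[R]_N, (forall j, x ord0 j <= y ord0 j) ->
    ae_le P i (V1 x) (V1 y).

Definition order_continuous d (T : measurableType d) (R : realType)
  (P : probability T R) (X : topologicalLmodType R) (i : X -> T -> R) : Prop :=
  forall (Xs : nat -> X) (x : X),
    {ae P, forall w, (fun n => i (Xs n) w) @ \oo --> i x w} ->
    (exists s : X, {ae P, forall w,
        ereal_sup (range (fun n => (`|i (Xs n) w|)%:E)) = (i s w)%:E}) ->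
    Xs @ \oo --> x.

(* X = L^0 (every measurable function is a.s. equal to some element of X)
   and the topology of X is that of convergence in probability, given by the
   neighborhood base { y | P(|y - x| >= e) < e }, e > 0 (Ky Fan balls). *)
Definition L0_in_probability d (T : measurableType d) (R : realType)
  (P : probability T R) (X : topologicalLmodType R) (i : X -> T -> R) : Prop :=
  (forall f : T -> R, measurable_fun setT f -> exists x : X, (i x = f %[ae P])) /\
  (forall (x : X) (A : set X), nbhs x A <->
     exists e : R, 0 < e /\
       (forall y : X, (P [set w | (e <= `|i y w - i x w|)%R] < e%:E)%E -> A y)).

From HB Require Import structures.
From mathcomp Require Import all_boot all_order all_algebra.
From mathcomp Require Import all_classical all_reals all_analysis.
From mathcomp Require Import lra.
Import Order.TTheory GRing.Theory Num.Theory.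
Import numFieldNormedType.Exports.
Local Open Scope classical_set_scope.
Local Open Scope ring_scope.

(* Both cases rest on one reduction: if every y near x has V1(y) <= u a.s. for
   some u in a prescribed neighbourhood U of V1(x), then V1(y) = u - (u - V1(y))
   with u - V1(y) in X_+.
   In L^0 with convergence in probability take u = max(V1(y), V1(x)); then
   |u - V1(x)| exceeds e only where V1(y) - V1(x) does, and along any sequence
   y_n -> x these events have probability tending to 0, because weak upper
   semicontinuity puts their lim sup in a null set.
   In the order continuous case take u = V1(x + 1/(n+1)): by monotonicity and
   weak upper semicontinuity these converge a.s. to V1(x) and are squeezed
   between V1(x) and V1(x + 1), hence converge in X; every y that lies
   componentwise below x + 1/(n+1) satisfies V1(y) <= u. *)

Lemma limn_esup_le_near {R : realType} {u : nat -> R} {l e : R} : 0 < e ->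
  (limn_esup (fun n => (u n)%:E) <= l%:E)%E -> \forall n \near \oo, u n < l + e.
Proof.
move=> e0 supul.
have : (limn_esup (fun n => (u n)%:E) < (l + e)%:E)%E.
  by apply: le_lt_trans supul _; rewrite lte_fin ltrDl.
rewrite /limn_esup /limf_esup => /ereal_inf_lt[_ [V [M _ MV] <-]] supV.
exists M => // n /= Mn; rewrite -lte_fin; apply: le_lt_trans supV.
by apply: ereal_sup_ubound; exists n => //; exact: MV.
Qed.

Lemma normr_le_max_normr (R : realDomainType) (a t b : R) :
  a <= t -> t <= b -> `|t| <= Num.max `|a| `|b|.
Proof.
move=> xt tb; rewrite le_max; have [t0|t0] := leP 0 t.
  by rewrite (ger0_norm t0) (ger0_norm (le_trans t0 tb)) tb orbT.
by rewrite (ltr0_norm t0) (ltr0_norm (le_lt_trans xt t0)) lerN2 xt.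
Qed.

Lemma normr_maxrBr (R : realDomainType) (a b : R) :
  `|Num.max a b - b| = Num.max (a - b) 0.
Proof.
have [ba|ab] := leP a b.
  by rewrite subrr normr0 max_r // subr_le0.
by rewrite ger0_norm ?max_l ?subr_ge0 ?ltW.
Qed.

Lemma le_measure_ae d (T : measurableType d) (R : realType)
    (mu : {measure set T -> \bar R}) (A B : set T) :
  measurable A -> measurable B -> {ae mu, forall w, A w -> B w} ->
  (mu A <= mu B)%E.
Proof.
move=> mA mB [N [mN muN0 AB_N]].
apply: (@le_trans _ _ (mu (B `|` N))).
  apply: le_measure; rewrite ?inE //; first exact: measurableU.
  move=> w Aw; have [Bw|nBw] := pselect (B w); first by left.
  by right; apply: AB_N => /(_ Aw).
by apply: le_trans (measureU2 mu mB mN) _; rewrite (_ : _ N = 0%E) ?adde0.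
Qed.

Lemma nbhs_of_seq (R : realType) (V : pseudoMetricType R) (x : V)
    (Q : V -> Prop) :
  (forall u : nat -> V, u @ \oo --> x -> \forall n \near \oo, Q (u n)) ->
  \forall y \near x, Q y.
Proof.
move=> Qseq; apply: contrapT => notQx.
have /choice[u uP] : forall n, exists y, ball x (harmonic n) y /\ ~ Q y.
  move=> n; apply: contrapT => nex; apply: notQx; apply/nbhs_ballP.
  exists (harmonic n); first exact: harmonic_gt0.
  by move=> y xy; apply: contrapT => nQy; apply: nex; exists y.
have ucvg : u @ \oo --> x.
  apply/cvg_ballP => r r0.
  have [M _ HM] := (cvgrPdist_lt _ _).1 (@cvg_harmonic R) r r0.
  exists M => // n /HM; rewrite sub0r normrN ger0_norm ?harmonic_ge0 // => hr.
  exact: le_ball (ltW hr) _ (uP n).1.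
have [M _ HM] := Qseq u ucvg.
exact: (uP M).2 (HM M (leqnn M)).
Qed.

Lemma measurable_superlevel_set d (T : measurableType d) (R : realType)
    (f : T -> R) (e : R) :
  measurable_fun setT f -> measurable [set w | e <= f w].
Proof.
move=> mf.
by have := measurable_fun_le measurableT (measurable_cst e) mf; rewrite setTI.
Qed.

Lemma prob_exceed_cvg0 {d} {T : measurableType d} {R : realType}
    (P : probability T R) (f : nat -> T -> R) (g : T -> R) (e : R) :
  0 < e -> (forall n, measurable_fun setT (f n)) -> measurable_fun setT g ->
  {ae P, forall w, (limn_esup (fun n => (f n w)%:E) <= (g w)%:E)%E} ->
  P [set w | e <= f n w - g w] @[n --> \oo] --> 0%E.
Proof.
move=> e0 mf mg limsup_le.
pose F n := [set w | e <= f n w - g w].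
have mF n : measurable (F n).
  exact/measurable_superlevel_set/measurable_realfun.measurable_funB.
have limsupF0 : P (lim_sup_set F) = 0%E.
  have mlimsupF : measurable (lim_sup_set F).
    by apply: bigcap_measurable => // n _; exact: bigcup_measurable.
  have [N [mN PN0 sN]] := limsup_le.
  apply: (subset_measure0 mlimsupF mN) PN0 => w Fw; apply: sN.
  move=> /(limn_esup_le_near e0)[M _ HM].
  have [k /= Mk Fkw] := Fw M I.
  by move: (HM k Mk) Fkw; rewrite /F /=; lra.
have tailF : P (\bigcup_(k in [set k | (n <= k)%N]) F k) @[n --> \oo] --> 0%E.
  rewrite -limsupF0; apply: lim_sup_set_cvg => //.
  apply: le_lt_trans (probability_le1 _ _) (ltry _).
  exact: bigcup_measurable.
apply: squeeze_cvge (cvg_cst 0%E) tailF; apply: nearW => n.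
rewrite measure_ge0 le_measure ?inE //; first exact: mF.
  exact: bigcup_measurable.
by move=> w Fw; exists n => /=.
Qed.

Lemma nbhs_rV_le_addr {R : realType} {N : nat} (x : 'rV[R]_N) (c : R) :
  0 < c -> \forall y \near x, forall j, (y : 'rV[R]_N) ord0 j <= x ord0 j + c.
Proof.
move=> c0; apply/nbhs_ballP; exists c => // y [_ xy] j.
move: (xy ord0 j); rewrite -ball_normE /ball_ /= => /ltr_normlP[+ _].
by rewrite opprB ltrBlDr addrC => /ltW.
Qed.

Section L0_ideal.
Context d (T : measurableType d) (R : realType) (P : probability T R)
  (X : topologicalLmodType R) (i : X -> T -> R).

Lemma order_continuous_dominated (Xs : nat -> X) (x b : X) :
  order_continuous P i ->
  {ae P, forall w, i (Xs n) w @[n --> \oo] --> i x w} ->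
  {ae P, forall w, forall n, `|i (Xs n) w| <= i b w} ->
  Xs @ \oo --> x.
Proof.
move=> oc Xsx Xsb.
(* Prepending [b] makes the supremum of the [|Y_n|] exactly [b], an element of [X]. *)
pose Ys n := if n is k.+1 then Xs k else b.
suff Ysx : Ys @ \oo --> x.
  by move=> A /Ysx[M _ YsA]; exists M => // n Mn; exact: YsA n.+1 (leqW Mn).
apply: oc.
  by apply: filterS Xsx => w Xsxw; rewrite -cvg_shiftS.
exists b; apply: filterS Xsb => w Xsbw.
have b0 : 0 <= i b w := le_trans (normr_ge0 _) (Xsbw 0%N).
apply/eqP; rewrite eq_le; apply/andP; split.
  by apply: ge_ereal_sup => _ [[|n] _ <-]; rewrite lee_fin //= ger0_norm.
by apply: ereal_sup_ubound; exists 0%N => //=; rewrite ger0_norm.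
Qed.

Hypothesis iX : L0_ideal P i.

Lemma L0_ideal_sub (u v : X) : {ae P, forall w, i (u - v) w = i u w - i v w}.
Proof.
case: iX => _ _ ilin _ _; have := ilin (-1) v u; rewrite scaleN1r addrC.
by apply: filterS => w /(_ I) ->; rewrite mulN1r addrC.
Qed.

Lemma ae_nonneg_subr (u v : X) : ae_le P i v u -> ae_nonneg P i (u - v).
Proof.
by apply: filterS2 (L0_ideal_sub u v) => w -> vu; rewrite subr_ge0.
Qed.

Lemma L0_ideal_abs (v : X) : exists a : X, {ae P, forall w, i a w = `|i v w|}.
Proof.
case: iX => imeas _ _ isolid _.
have mv : measurable_fun setT (fun w => `|i v w|).
  exact: measurableT_comp (@measurable_realfun.normr_measurable R setT) (imeas v).
have absv : {ae P, forall w, `| `|i v w| | <= `|i v w|}.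
  by apply: aeW => w; rewrite normr_id.
have [a av] := isolid _ v mv absv.
by exists a; apply: filterS av => w /(_ I).
Qed.

Lemma L0_ideal_max_abs (u v : X) :
  exists b : X, {ae P, forall w, i b w = Num.max `|i u w| `|i v w|}.
Proof.
case: iX => _ _ _ _ imax.
have [[a au] [a' av]] := (L0_ideal_abs u, L0_ideal_abs v).
have [b bE] := imax a a'; exists b.
by apply: filterS3 au av bE => w <- <- /(_ I).
Qed.

Lemma usc_at_dominated (N : nat) (V1 : 'rV[R]_N -> X) (x : 'rV[R]_N) :
  (forall U, nbhs (V1 x) U ->
     \forall y \near x, exists2 u, U u & ae_le P i (V1 y) u) ->
  usc_at P i V1 x.
Proof.
move=> dom U /dom Ux; eexists; split; first exact: Ux.
move=> y [u Uu yu]; exists u, (u - V1 y).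
by split => //; [exact: ae_nonneg_subr | rewrite opprB addrC subrK].
Qed.

Lemma usc_at_in_probability (N : nat) (V1 : 'rV[R]_N -> X) (x : 'rV[R]_N) :
  L0_in_probability P i -> weakly_usc P i V1 -> usc_at P i V1 x.
Proof.
case: iX => imeas _ _ _ imax [_ nbhsE] wusc.
apply: usc_at_dominated => U /nbhsE[e [e0 eU]].
pose A y := [set w | e <= i (V1 y) w - i (V1 x) w].
have small : \forall y \near x, (P (A y) < e%:E)%E.
  apply: nbhs_of_seq => ys ysx.
  have PA0 := prob_exceed_cvg0 P (fun n => i (V1 (ys n))) (i (V1 x)) e e0
    (fun n => imeas (V1 (ys n))) (imeas (V1 x)) (wusc _ _ ysx).
  exact: PA0 _ (nbhs_open_ereal_lt (f := fun=> e) e0).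
apply: filterS small => y PAy.
have [m mE] := imax (V1 y) (V1 x); exists m; last first.
  by apply: filterS mE => w /(_ I) ->; rewrite le_max lexx.
apply: eU; apply: le_lt_trans PAy; apply: le_measure_ae.
- apply: measurable_superlevel_set.
  exact/measurableT_comp/measurable_realfun.measurable_funB.
- exact/measurable_superlevel_set/measurable_realfun.measurable_funB.
- apply: filterS mE => w /(_ I) mw; rewrite /= mw.
  by rewrite normr_maxrBr le_max => /orP[// | ]; rewrite leNgt e0.
Qed.

Lemma usc_at_order_continuous (N : nat) (V1 : 'rV[R]_N -> X) (x : 'rV[R]_N) :
  order_continuous P i -> nondecreasingV P i V1 -> weakly_usc P i V1 ->
  usc_at P i V1 x.
Proof.
move=> oc mono wusc; apply: usc_at_dominated => U UV1x.
pose z n : 'rV[R]_N := x + harmonic n *: const_mx 1.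
have zE n j : z n ord0 j = x ord0 j + n.+1%:R^-1 by rewrite !mxE /= mulr1.
have zx : z @ \oo --> x.
  rewrite -[x in _ --> x]addr0 -(scale0r (const_mx 1)).
  exact: cvgD (cvg_cst _) (cvgZ cvg_harmonic (cvg_cst _)).
have V1x_le n : ae_le P i (V1 x) (V1 (z n)).
  by apply: mono => j; rewrite zE lerDl.
have V1z_le n : ae_le P i (V1 (z n)) (V1 (z 0%N)).
  by apply: mono => j; rewrite !zE lerD2l lef_pV2 ?posrE // ler_nat.
have [b bE] := L0_ideal_max_abs (V1 x) (V1 (z 0%N)).
have V1zx : V1 \o z @ \oo --> V1 x.
  apply: (order_continuous_dominated _ _ b oc).
    apply: filterS2 (ae_foralln V1x_le) (wusc _ _ zx) => w lb ub.
    have lbE n : ((i (V1 x) w)%:E <= (i (V1 (z n)) w)%:E)%E by rewrite lee_fin.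
    exact: fine_cvg (limn_esup_le_cvg ub lbE).
  apply: filterS3 (ae_foralln V1x_le) (ae_foralln V1z_le) bE => w lb ub -> n.
  exact: normr_le_max_normr (lb n) (ub n).
have [M _ UV1z] := V1zx U UV1x.
apply: filterS (nbhs_rV_le_addr x _ (harmonic_gt0 M)) => y yz.
exists (V1 (z M)); first exact: UV1z M (leqnn M).
by apply: mono => j; rewrite zE; exact: yz.
Qed.

End L0_ideal.

Theorem mainTheorem12 (d : measure_display) (T : measurableType d)
  (R : realType) (P : probability T R) (X : topologicalLmodType R)
  (i : X -> T -> R) (N : nat) (V1 : 'rV[R]_N -> X) :
  L0_ideal P i ->
  weakly_usc P i V1 ->
  (L0_in_probability P i \/ (order_continuous P i /\ nondecreasingV P i V1)) ->
  usc P i V1.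
Proof.
move=> iX wusc [inprob | [oc mono]] x.
- exact: usc_at_in_probability.
- exact: usc_at_order_continuous.
Qed.
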